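(* Let $\phi$ assign to each matroid $M$ on $E$ the class in $K_T^0(X_E)$ given by a fixed polynomial expression in the exterior powers of $[\mathcal S_M]$, $[\mathcal Q_M]$, $[\mathcal S_M^\vee]$, $[\mathcal Q_M^\vee]$, and let $\psi$ assign to $M$ the (equivariant or non-equivariant) Chow class on $X_E$ given by a fixed polynomial expression in the (equivariant or non-equivariant, respectively) Chern classes of $[\mathcal S_M]$, $[\mathcal Q_M]$ and their duals. Then $\phi$ and $\psi$ are valuative.
   Context: $E=\{0,\dots,n\}$, $T=(\mathbb C^* )^E$, $X_E$ the permutohedral variety (toric variety of the fan in $\mathbb R^E/\mathbb R\mathbf 1$ with cones $\operatorname{Cone}(\overline{\mathbf e}_{S_1},\dots,\overline{\mathbf e}_{S_k})$ for chains of nonempty proper subsets), fixed points $p_\sigma$ indexed by permutations of $E$; $K_T^0(X_E)$ embeds in $\prod_\sigma\mathbb Z[T_0^{\pm1},\dots,T_n^{\pm1}]$ by restriction. $B_\sigma(M)$ is the lexicographically first basis for the order $\sigma(0)\prec\cdots\prec\sigma(n)$; $[\mathcal S_M],[\mathcal Q_M]\in K_T^0(X_E)$ restrict at $p_\sigma$ to $\sum_{i\in B_\sigma(M)}T_i^{-1}$ and $\sum_{i\notin B_\sigma(M)}T_i^{-1}$; $\vee$ is dual. The base polytope of $M$ is $P(M)=\operatorname{Conv}(\sum_{i\in B}\mathbf e_i: B\text{ a basis})\subset\mathbb R^E$, and $1_P$ denotes the indicator function. A function $\phi$ from matroids on $E$ to an abelian group is valuative if whenever $M_1,\dots,M_\ell$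 are matroids on $E$ and $a_i\in\mathbb Z$ with $\sum_ia_i1_{P(M_i)}=0$, one has $\sum_ia_i\phi(M_i)=0$. *)

From HB Require Import structures.
From mathcomp Require Import all_boot all_order all_algebra all_fingroup fraction.
From mathcomp Require Import boolp reals.
From mathcomp Require Import mpoly.

Set Implicit Arguments.
Unset Strict Implicit.
Unset Printing Implicit Defensive.

Import Order.TTheory GRing.Theory Num.Theory.
Local Open Scope ring_scope.

(* Ground set E = {0,...,n} is 'I_n.+1. *)

Definition basis_exchange (n : nat) (bs : {set {set 'I_n.+1}}) : bool :=
  [forall B1 in bs, forall B2 in bs, forall x in B1 :\: B2,
     exists y in B2 :\: B1, (y |: (B1 :\ x)) \in bs].

Record matroid (n : nat) := Matroid {
  bases : {set {set 'I_n.+1}};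
  bases_neq0 : bases != set0;
  bases_exchange : basis_exchange bases }.

(* Lexicographic comparison of subsets for the total order
   sigma(0) < sigma(1) < ... < sigma(n): B <=lex B' iff B = B' or the
   smallest element (for this order) of the symmetric difference lies in B. *)
Definition lex_le (n : nat) (s : {perm 'I_n.+1}) (B B' : {set 'I_n.+1}) : bool :=
  (B == B') ||
  [exists i in B :\: B',
     forall j, ((s^-1)%g j < (s^-1)%g i)%N ==> ((j \in B) == (j \in B'))].

Definition lexfirst_basis (n : nat) (M : matroid n) (s : {perm 'I_n.+1})
  : {set 'I_n.+1} :=
  odflt set0 [pick B in bases M | [forall B' in bases M, lex_le s B B']].

Definition in_base_polytope (R : realType) (n : nat) (M : matroid n)
  (x : 'I_n.+1 -> R) : Prop :=
  exists l : {set 'I_n.+1} -> R,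
    [/\ forall B, 0 <= l B,
        forall B, B \notin bases M -> l B = 0,
        \sum_B l B = 1 &
        forall i, x i = \sum_B l B * (i \in B)%:R].

Definition indic_P (R : realType) (n : nat) (M : matroid n)
  (x : 'I_n.+1 -> R) : int :=
  if `[< in_base_polytope M x >] then 1 else 0.

Definition valuative (R : realType) (n : nat) (V : zmodType)
  (phi : matroid n -> V) : Prop :=
  forall s : seq (int * matroid n),
    (forall x : 'I_n.+1 -> R, \sum_(p <- s) p.1 * indic_P p.2 x = 0) ->
    \sum_(p <- s) phi p.2 *~ p.1 = 0.

Definition esym (A : comNzRingType) (n : nat) (k : nat)
  (D : {set 'I_n.+1}) (f : 'I_n.+1 -> A) : A :=
  \sum_(S : {set 'I_n.+1} | (S \subset D) && (#|S| == k)) \prod_(i in S) f i.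

Definition ieval (A : comNzRingType) (m : nat) (h : 'I_m -> A)
  (F : {mpoly int[m]}%R) : A :=
  mpoly.mmap (fun z : int => z%:~R) h F.

(* Localization ring for K_T^0(X_E): Laurent polynomials Z[T_0^+-1..T_n^+-1],
   realized inside the fraction field of Z[T_0..T_n]. *)
Definition Laurent (n : nat) := {fraction {mpoly int[n.+1]}%R}.
Definition Tvar (n : nat) (i : 'I_n.+1) : Laurent n := tofrac ('X_i)%R.

(* Restriction to p_sigma of the four classes, labelled by 'I_4:
   0 : [S_M] = sum_{i in B} T_i^-1,   1 : [Q_M] = sum_{i notin B} T_i^-1,
   2 : [S_M^v] = sum_{i in B} T_i,    3 : [Q_M^v] = sum_{i notin B} T_i.
   The k-th exterior power of a sum of characters restricts to e_k of them. *)
Definition ext_power_loc (n : nat) (M : matroid n) (s : {perm 'I_n.+1})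
  (c : 'I_4) (k : nat) : Laurent n :=
  let B := lexfirst_basis M s in
  match val c with
  | 0 => esym k B (fun i => (Tvar i)^-1)
  | 1 => esym k (~: B) (fun i => (Tvar i)^-1)
  | 2 => esym k B (@Tvar n)
  | _ => esym k (~: B) (@Tvar n)
  end.

(* phi(M) in K_T^0(X_E), via its restrictions to all fixed points p_sigma:
   F(lambda^{k_j}(class c_j))_j for a fixed integer polynomial F in m variables,
   variable j standing for the k_j-th exterior power of class c_j. *)
Definition K_class (n m : nat) (F : {mpoly int[m]}%R) (idx : 'I_m -> 'I_4 * nat)
  (M : matroid n) : {ffun {perm 'I_n.+1} -> Laurent n} :=
  [ffun s => ieval (fun j => ext_power_loc M s (idx j).1 (idx j).2) F].

(* Equivariant Chow ring A_T^*(X_E), embedded by localization in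
   prod_sigma Z[t_0,...,t_n]; the character T_i has weight t_i, so
   c^T(sum of characters chi) restricts to prod (1 + chi). *)
Definition Tpoly (n : nat) := {mpoly int[n.+1]}%R.
Definition tvar (n : nat) (i : 'I_n.+1) : Tpoly n := ('X_i)%R.

Definition chern_loc (n : nat) (M : matroid n) (s : {perm 'I_n.+1})
  (c : 'I_4) (k : nat) : Tpoly n :=
  let B := lexfirst_basis M s in
  match val c with
  | 0 => esym k B (fun i => - tvar i)
  | 1 => esym k (~: B) (fun i => - tvar i)
  | 2 => esym k B (@tvar n)
  | _ => esym k (~: B) (@tvar n)
  end.

Definition chow_classT (n m : nat) (F : {mpoly int[m]}%R)
  (idx : 'I_m -> 'I_4 * nat) (M : matroid n) : {ffun {perm 'I_n.+1} -> Tpoly n} :=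
  [ffun s => ieval (fun j => chern_loc M s (idx j).1 (idx j).2) F].

(* GKM description of the image of A_T^*(X_E): f_sigma - f_sigma' divisible
   by t_{sigma(i)} - t_{sigma(i+1)} when sigma' = sigma o (i i+1). *)
Definition mdvd (n : nat) (a b : Tpoly n) : Prop := exists q, b = q * a.

Definition in_chowT (n : nat) (f : {ffun {perm 'I_n.+1} -> Tpoly n}) : Prop :=
  forall (s : {perm 'I_n.+1}) (i j : 'I_n.+1), val j = (val i).+1 ->
    mdvd (tvar (s i) - tvar (s j)) (f s - f (tperm i j * s)%g).

(* Non-equivariant Chow ring A^*(X_E) = A_T^*(X_E) / (t_0,...,t_n) A_T^*(X_E).
   The non-equivariant class of M is the image of the equivariant one
   (Chern classes commute with the forgetful map).  An element of A_T^*
   maps to zero in A^* iff it lies in the ideal (t_0,...,t_n) A_T^*. *)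
Definition chow_nonequiv_zero (n : nat) (f : {ffun {perm 'I_n.+1} -> Tpoly n})
  : Prop :=
  exists g : 'I_n.+1 -> {ffun {perm 'I_n.+1} -> Tpoly n},
    (forall j, in_chowT (g j)) /\
    forall s, f s = \sum_j tvar j * g j s.

Definition valuative_nonequiv (R : realType) (n : nat)
  (psiT : matroid n -> {ffun {perm 'I_n.+1} -> Tpoly n}) : Prop :=
  forall s : seq (int * matroid n),
    (forall x : 'I_n.+1 -> R, \sum_(p <- s) p.1 * indic_P p.2 x = 0) ->
    chow_nonequiv_zero (\sum_(p <- s) psiT p.2 *~ p.1).

From HB Require Import structures.
From mathcomp Require Import all_boot all_order all_algebra all_fingroup fraction.
From mathcomp Require Import boolp reals.
From mathcomp Require Import mpoly.
From mathcomp Require Import lra ring zify.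

(* At every fixed point p_sigma both classes depend on M only through the
   lexicographically first basis B_sigma(M), so it suffices that
   M |-> [B_sigma(M) = B] is valuative; the non-equivariant statement follows
   because the class of a relation is then zero.
   For the weights w_i = (n+2)^(n - sigma^-1(i)), B_sigma(M) is the basis of
   largest weight, i.e. the vertex of P(M) maximising the linear form w.  For a
   polytope Q, [max_Q w = r] is the jump at r of y |-> chi(Q /\ {w = y}), where
   chi(Q) = [Q nonempty].  The Euler characteristic chi is a valuation: sweeping
   by coordinate hyperplanes reduces it to closed segments of the line, where a
   relation sum_j a_j 1_{I_j} = 0 forces sum_j a_j [max I_j = r] = 0 for every r.
   Projections of polytopes are closed because linear programs attain their
   maxima. *)

Set Implicit Arguments.
Unset Strict Implicit.
Unset Printing Implicit Defensive.

Import Order.TTheory GRing.Theory Num.Theory.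
Local Open Scope ring_scope.

Definition ind (P : Prop) : int := if `[< P >] then 1 else 0.

Lemma indT (P : Prop) : P -> ind P = 1.
Proof. by move=> p; rewrite /ind asboolT. Qed.

Lemma indF (P : Prop) : ~ P -> ind P = 0.
Proof. by move=> np; rewrite /ind asboolF. Qed.

Lemma ind_iff (P Q : Prop) : (P <-> Q) -> ind P = ind Q.
Proof. by move=> /propext->. Qed.

Lemma eq_sum_ind (J : finType) (a : J -> int) (P Q : J -> Prop) :
  (forall j, P j <-> Q j) -> \sum_j a j * ind (P j) = \sum_j a j * ind (Q j).
Proof. by move=> PQ; apply: eq_bigr => j _; rewrite (ind_iff (PQ j)). Qed.

Lemma sum_ind_slice (X Y : Type) (J : finType) (a : J -> int) (S : J -> X -> Prop)
    (f : X -> Y) (y : Y) :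
  (forall x, \sum_j a j * ind (S j x) = 0) ->
  forall x, \sum_j a j * ind (S j x /\ f x = y) = 0.
Proof.
move=> rel x; have [fx|nfx] := pselect (f x = y).
  by rewrite -[RHS](rel x); apply: eq_sum_ind => j; tauto.
by rewrite big1 // => j _; rewrite indF ?mulr0 // => -[].
Qed.

Definition dot (R : pzRingType) (T : finType) (c x : T -> R) : R := \sum_i c i * x i.

Definition dot_image (R : pzRingType) (T : finType) (S : (T -> R) -> Prop) (c : T -> R) :
  R -> Prop := fun y => exists2 x, S x & dot c x = y.

Section Segments.
Variable R : realFieldType.

(* [lo > hi] gives the empty segment. *)
Definition segment (I : R -> Prop) : Prop :=
  exists lo hi : R, forall y, I y <-> lo <= y <= hi.

Definition is_max (I : R -> Prop) (r : R) : Prop := I r /\ forall y, r < y -> ~ I y.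

Lemma is_max_unique (I : R -> Prop) r r' : is_max I r -> is_max I r' -> r = r'.
Proof. by move=> [Ir maxr] [Ir' maxr']; case: (ltgtP r r') => // [/maxr|/maxr']. Qed.

Lemma segment_has_max (I : R -> Prop) :
  segment I -> (exists y, I y) -> exists r, is_max I r.
Proof.
move=> [lo [hi Iseg]] [y /Iseg /andP[loy yhi]]; exists hi; split.
  by apply/Iseg; rewrite (le_trans loy yhi) lexx.
by move=> z hiz /Iseg /andP[_ zhi]; move: (lt_le_trans hiz zhi); rewrite ltxx.
Qed.

Lemma segment_jump (I : R -> Prop) r : segment I ->
  exists2 e : R, 0 < e & forall e', 0 < e' -> e' <= e ->
    ind (I r) - ind (I (r + e')) = ind (is_max I r).
Proof.
move=> [lo [hi Iseg]].
have notI y : y < lo \/ hi < y -> ~ I y by move=> Hy /Iseg /andP[]; case: Hy; lra.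
have [rlo|lor] := ltP r lo.
  have nIr : ~ I r by apply: notI; left.
  exists ((lo - r) / 2); first lra.
  move=> e' e'0 e'le; rewrite !indF ?subrr //; [by case | apply: notI; left; lra].
have [hir|rhi] := ltP hi r.
  have nIr : ~ I r by apply: notI; right.
  exists 1 => // e' e'0 _; rewrite !indF ?subrr //; [by case | apply: notI; right; lra].
have Ir : I r by apply/Iseg; rewrite lor rhi.
have [rlthi|hir] := ltP r hi.
  exists (hi - r); first by rewrite subr_gt0.
  move=> e' e'0 e'le; have Ire : I (r + e') by apply/Iseg; lra.
  rewrite (indT Ir) (indT Ire) subrr indF // => -[_ /(_ hi rlthi)].
  by apply; apply/Iseg; lra.
have maxr : is_max I r by split=> // y ry /Iseg; lra.
exists 1 => // e' e'0 _; rewrite (indT Ir) (indT maxr) indF ?subr0 // => /Iseg.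
lra.
Qed.

Lemma eventually_sum (T : Type) (s : seq T) (f : T -> R -> int) (g : T -> int) :
  (forall t, exists2 e : R, 0 < e & forall e', 0 < e' -> e' <= e -> f t e' = g t) ->
  exists2 e : R, 0 < e & forall e', 0 < e' -> e' <= e ->
    \sum_(t <- s) f t e' = \sum_(t <- s) g t.
Proof.
move=> fg; elim: s => [|t s [e2 e2_gt0 sum_fg]].
  by exists 1 => // e' _ _; rewrite !big_nil.
have [e1 e1_gt0 fg_t] := fg t.
exists (Order.min e1 e2); first by rewrite lt_min e1_gt0 e2_gt0.
move=> e' e'_gt0; rewrite le_min => /andP[e'1 e'2].
by rewrite !big_cons fg_t // sum_fg.
Qed.

Variables (J : finType) (a : J -> int) (I : J -> R -> Prop).
Hypothesis I_segment : forall j, segment (I j).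

Lemma sum_ind_segment_max :
  (forall y, \sum_j a j * ind (I j y) = 0) ->
  forall r, \sum_j a j * ind (is_max (I j) r) = 0.
Proof.
move=> rel r.
have jumps j : exists2 e : R, 0 < e & forall e', 0 < e' -> e' <= e ->
    a j * (ind (I j r) - ind (I j (r + e'))) = a j * ind (is_max (I j) r).
  have [e e_gt0 jumpE] := segment_jump r (I_segment j).
  by exists e => // e' e'_gt0 e'_le; rewrite jumpE.
have [e e_gt0 sumE] := eventually_sum (index_enum J) jumps.
rewrite -(sumE e) //; under eq_bigr do rewrite mulrBr.
by rewrite sumrB !rel subrr.
Qed.

Lemma sum_ind_segment_nonempty :
  (forall y, \sum_j a j * ind (I j y) = 0) ->
  \sum_j a j * ind (exists y, I j y) = 0.
Proof.
move=> /sum_ind_segment_max max_rel.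
have [h hP] : {h : J -> R & forall j, (exists y, I j y) -> is_max (I j) (h j)}.
  apply: (@choice _ _ (fun j h => (exists y, I j y) -> is_max (I j) h)) => j.
  have [ne|e] := pselect (exists y, I j y); last by exists 0.
  by have [r ?] := segment_has_max (I_segment j) ne; exists r.
pose maxima := undup (codom h).
have split_max j : ind (exists y, I j y) = \sum_(r <- maxima) ind (is_max (I j) r).
  have [ne|e] := pselect (exists y, I j y); last first.
    by rewrite indF // big1 // => r _; rewrite indF // => -[Ir _]; apply: e; exists r.
  rewrite indT //.
  transitivity (\sum_(r <- maxima | r == h j) (1 : int)).
    by rewrite big_const_seq count_uniq_mem ?undup_uniq // mem_undup codom_f.
  rewrite big_mkcond; apply: eq_bigr => r _.
  case: eqP => [->|ne_r]; first by rewrite indT //; exact: hP.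
  by rewrite indF // => mr; apply: ne_r; apply: is_max_unique mr (hP j ne).
under eq_bigr do rewrite split_max big_distrr.
by rewrite exchange_big big1_seq // => r _; rewrite max_rel.
Qed.

End Segments.

Section LinearProgramming.
Variables (R : realFieldType) (W : finType).
Implicit Types (L : (W -> R) -> Prop) (c l : W -> R).

Definition feasible L l : Prop := [/\ forall v, 0 <= l v, \sum_v l v = 1 & L l].

Definition affine_pred L : Prop :=
  forall l l1 l2 t, L l -> L l1 -> L l2 -> L (fun v => l v + t * (l1 v - l2 v)).

Definition facet L v : (W -> R) -> Prop := fun l => L l /\ l v = 0.

Definition support L : {set W} := [set v | `[< exists2 l, feasible L l & l v != 0 >]].

Lemma dot_affine c l l1 l2 t :
  dot c (fun v => l v + t * (l1 v - l2 v)) = dot c l + t * (dot c l1 - dot c l2).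
Proof.
rewrite /dot -sumrB mulr_sumr -big_split /=.
by apply: eq_bigr => v _; ring.
Qed.

Lemma affine_predI L L' :
  affine_pred L -> affine_pred L' -> affine_pred (fun l => L l /\ L' l).
Proof. by move=> affL affL' l l1 l2 t [? ?] [? ?] [? ?]; split; [apply: affL|apply: affL']. Qed.

Lemma affine_pred_dot c y : affine_pred (fun l => dot c l = y).
Proof. by move=> l l1 l2 t dl dl1 dl2; rewrite dot_affine dl dl1 dl2 subrr mulr0 addr0. Qed.

Lemma affine_pred_facet L v : affine_pred L -> affine_pred (facet L v).
Proof.
by move=> affL; apply: affine_predI => // l l1 l2 t -> -> ->; rewrite subrr mulr0 addr0.
Qed.

Lemma feasible_facet L v l : feasible (facet L v) l -> feasible L l.
Proof. by case=> ? ? []. Qed.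

Lemma support_facet_proper L v : v \in support L -> support (facet L v) \proper support L.
Proof.
move=> vL; apply/properP; split.
  apply/subsetP => u; rewrite !inE => /asboolP[l fl lu].
  by apply/asboolP; exists l => //; apply: feasible_facet fl.
by exists v => //; rewrite inE; apply/asboolP => -[l [_ _ [_ ->]]]; rewrite eqxx.
Qed.

Lemma feasible_segment L l1 l2 t : affine_pred L -> feasible L l1 -> feasible L l2 ->
  0 <= t <= 1 -> feasible L (fun v => l2 v + t * (l1 v - l2 v)).
Proof.
move=> affL [l1_ge0 sum_l1 Ll1] [l2_ge0 sum_l2 Ll2] /andP[t_ge0 t_le1]; split.
- move=> v; have -> : l2 v + t * (l1 v - l2 v) = t * l1 v + (1 - t) * l2 v by ring.
  by rewrite addr_ge0 ?mulr_ge0 ?subr_ge0.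
- by rewrite big_split /= -mulr_sumr sumrB sum_l1 sum_l2 subrr mulr0 addr0.
- exact: affL.
Qed.

Lemma feasible_push_to_facet L c l l1 l2 : affine_pred L ->
  feasible L l -> feasible L l1 -> feasible L l2 -> (exists u, l1 u != l2 u) ->
  exists2 v, v \in support L & exists2 l', feasible (facet L v) l' & dot c l <= dot c l'.
Proof.
move=> affL fl; wlog c_dir : l1 l2 / 0 <= dot c l1 - dot c l2.
  move=> push f1 f2 [u ne_u]; have [|/ltW] := leP 0 (dot c l1 - dot c l2).
    by move=> ?; apply: (push l1 l2) => //; exists u.
  by rewrite -oppr_ge0 opprB => ?; apply: (push l2 l1) => //; exists u; rewrite eq_sym.
move=> [l1_ge0 sum_l1 Ll1] [l2_ge0 sum_l2 Ll2] [u ne_u].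
pose d v := l1 v - l2 v.
have [w dw_lt0] : exists w, d w < 0.
  apply/not_existsP => d_ge0; move/negP: ne_u; apply; rewrite -subr_eq0; apply/eqP.
  apply: (@psumr_eq0P _ _ predT d) => // [v _|]; first by rewrite leNgt; apply/negP/d_ge0.
  by rewrite sumrB sum_l1 sum_l2 subrr.
case: (@Order.TotalTheory.arg_minP _ _ _ w (fun v => d v < 0) (fun v => l v / - d v) dw_lt0).
move=> v0 dv0_lt0 v0_min; pose t := l v0 / - d v0.
have [l_ge0 sum_l Ll] := fl.
have t_ge0 : 0 <= t by rewrite divr_ge0 // oppr_ge0 ltW.
exists v0.
  rewrite inE; apply/asboolP; have [l1_0|] := eqVneq (l1 v0) 0; last by exists l1; first split.
  exists l2; first by split.
  by move: dv0_lt0; rewrite /d l1_0 sub0r oppr_lt0 => /gt_eqF ->.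
exists (fun v => l v + t * (l1 v - l2 v)); last by rewrite dot_affine lerDl mulr_ge0.
split.
- move=> v; have [dv_lt0|dv_ge0] := ltP (d v) 0; last first.
    by apply: addr_ge0; [exact: l_ge0 | exact: mulr_ge0].
  have := v0_min v dv_lt0; rewrite -/t ler_pdivlMr ?oppr_gt0 //.
  by rewrite -subr_ge0 mulrN opprK mulrC.
- by rewrite big_split /= -mulr_sumr sumrB sum_l1 sum_l2 subrr mulr0 addr0.
- split; first exact: affL.
  by rewrite -/(d v0) /t; field; rewrite lt_eqF.
Qed.

(* Either the feasible set is a point, or every feasible point is dominated by
   one on a facet of smaller support. *)
Lemma feasible_dot_max L c : affine_pred L -> (exists l, feasible L l) ->
  exists2 l0, feasible L l0 & forall l, feasible L l -> dot c l <= dot c l0.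
Proof.
have [k] := ubnP #|support L|; elim: k L => // k IH L supp_lt affL [l1 fl1].
have [[l2 [l3 [f2 f3 ne23]]]|unique] :=
  pselect (exists l2 l3, [/\ feasible L l2, feasible L l3 & exists u, l2 u != l3 u]); last first.
  exists l1 => // l fl; suff -> : l = l1 by [].
  apply: funext => v; apply/eqP; apply/negPn/negP => ne.
  by apply: unique; exists l, l1; split=> //; exists v.
have [mu muP] : {mu : W -> W -> R & forall v, v \in support L ->
    (exists l, feasible (facet L v) l) -> feasible (facet L v) (mu v) /\
    forall l, feasible (facet L v) l -> dot c l <= dot c (mu v)}.
  apply: (@choice _ _ (fun v m => v \in support L -> (exists l, feasible (facet L v) l) ->
    feasible (facet L v) m /\ forall l, feasible (facet L v) l -> dot c l <= dot c m)) => v.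
  have [vL|] := boolP (v \in support L); last by exists l1.
  have [ne|] := pselect (exists l, feasible (facet L v) l); last by exists l1.
  have supp_v : (#|support (facet L v)| < k)%N.
    by rewrite -ltnS; apply: leq_trans _ supp_lt; rewrite ltnS proper_card ?support_facet_proper.
  by have [m ? ?] := IH _ supp_v (affine_pred_facet affL) ne; exists m.
pose P v := `[< v \in support L /\ exists l, feasible (facet L v) l >].
have [v1 v1L [l' fl' _]] := feasible_push_to_facet c affL fl1 f2 f3 ne23.
have Pv1 : P v1 by apply/asboolP; split; last exists l'.
case: (@Order.TotalTheory.arg_maxP _ _ _ v1 P (fun v => dot c (mu v)) Pv1).
move=> v0 /asboolP[v0L ne0] v0_max.
exists (mu v0); first exact: (feasible_facet (muP v0 v0L ne0).1).
move=> l fl; have [v vL [l'' fl'' le_l]] := feasible_push_to_facet c affL fl f2 f3 ne23.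
apply: (le_trans le_l); apply: (le_trans ((muP v vL _).2 _ fl'')); first by exists l''.
by apply: v0_max; apply/asboolP; split; last exists l''.
Qed.

Lemma segment_feasible_dot L c :
  affine_pred L -> segment (dot_image (feasible L) c).
Proof.
move=> affL; have [ne|empty] := pselect (exists l, feasible L l); last first.
  exists 1, 0 => y; split=> [[l fl _]|/andP[]]; last lra.
  by case: empty; exists l.
have dotN l : dot (fun v => - c v) l = - dot c l.
  by rewrite /dot -sumrN; apply: eq_bigr => v _; rewrite mulNr.
have [hi f_hi hi_max] := feasible_dot_max c affL ne.
have [lo f_lo lo_min] := feasible_dot_max (fun v => - c v) affL ne.
exists (dot c lo), (dot c hi) => y; split.
  move=> [l fl <-]; rewrite hi_max // andbT -lerN2 -!dotN; exact: lo_min.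
move=> /andP[lo_y y_hi]; have [eq_lohi|ne_lohi] := eqVneq (dot c hi) (dot c lo).
  by exists lo => //; apply/eqP; rewrite eq_le lo_y -eq_lohi y_hi.
pose t := (y - dot c lo) / (dot c hi - dot c lo).
have lo_hi : dot c lo < dot c hi by rewrite lt_neqAle eq_sym ne_lohi (le_trans lo_y y_hi).
exists (fun v => lo v + t * (hi v - lo v)).
  apply: feasible_segment => //; apply/andP; split.
    by rewrite divr_ge0 // subr_ge0 // ltW.
  by rewrite ler_pdivrMr ?subr_gt0 // mul1r lerB.
by rewrite dot_affine /t; field; rewrite subr_eq0.
Qed.

End LinearProgramming.

Definition coord (R : pzRingType) (N : nat) (i : 'I_N) : 'I_N -> R :=
  fun j => (j == i)%:R.

Lemma dot_coord (R : pzRingType) (N : nat) (i : 'I_N) (x : 'I_N -> R) :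
  dot (coord R i) x = x i.
Proof.
rewrite /dot /coord (bigD1 i) //= eqxx mul1r big1 ?addr0 // => j /negbTE ->.
by rewrite mul0r.
Qed.

Section EulerCharacteristic.
Variables (R : realFieldType) (N : nat) (C : (('I_N -> R) -> Prop) -> Prop).
Hypothesis C_slice : forall S w y, C S -> C (fun x => S x /\ dot w x = y).
Hypothesis C_segment :
  forall S w, C S -> segment (dot_image S w).
Variables (J : finType) (a : J -> int).

(* Induction on the number [k] of free coordinates: from coordinate [k] on, the
   points of every [S j] agree with [tau]. *)
Lemma sum_ind_nonempty_sweep k (tau : 'I_N -> R) (S : J -> ('I_N -> R) -> Prop) :
  (k <= N)%N -> (forall j, C (S j)) ->
  (forall j x (i : 'I_N), S j x -> (k <= i)%N -> x i = tau i) ->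
  (forall x, \sum_j a j * ind (S j x) = 0) ->
  \sum_j a j * ind (exists x, S j x) = 0.
Proof.
elim: k tau S => [|k IH] tau S kN CS S_fixed rel.
  rewrite -[RHS](rel tau); apply: eq_sum_ind => j; split=> [[x Sx]|]; last by exists tau.
  by have <- : x = tau by apply: funext => i; exact: S_fixed Sx _.
pose i0 := Ordinal kN; pose xi0 := dot (coord R i0).
have slice_rel t : \sum_j a j * ind (exists x, S j x /\ xi0 x = t) = 0.
  apply: (IH (fun i => if i == i0 then t else tau i)) => [|j|j x i [Sx xt]|].
  - exact: ltnW.
  - exact: C_slice.
  - rewrite /xi0 dot_coord in xt; case: eqVneq => [-> //|ne_i le_ki].
    apply: S_fixed Sx _; rewrite ltn_neqAle le_ki andbT.
    by apply: contra ne_i => /eqP k_i; apply/eqP/val_inj; rewrite /= k_i.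
  - exact: sum_ind_slice.
have proj_rel t : \sum_j a j * ind (dot_image (S j) (coord R i0) t) = 0.
  by rewrite -[RHS](slice_rel t); apply: eq_sum_ind => j; split=> [[x ? ?]|[x []]]; exists x.
rewrite -[RHS](sum_ind_segment_nonempty (fun j => C_segment _ (CS j)) proj_rel).
apply: eq_sum_ind => j; split=> [[x Sx]|[t [x Sx _]]]; last by exists x.
by exists (xi0 x), x.
Qed.

Lemma sum_ind_nonempty (S : J -> ('I_N -> R) -> Prop) :
  (forall j, C (S j)) -> (forall x, \sum_j a j * ind (S j x) = 0) ->
  \sum_j a j * ind (exists x, S j x) = 0.
Proof.
move=> CS; apply: (@sum_ind_nonempty_sweep N (fun _ => 0)) => // j x i _.
by rewrite leqNgt ltn_ord.
Qed.

Lemma sum_ind_max (S : J -> ('I_N -> R) -> Prop) w :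
  (forall j, C (S j)) -> (forall x, \sum_j a j * ind (S j x) = 0) ->
  forall r, \sum_j a j * ind (is_max (dot_image (S j) w) r) = 0.
Proof.
move=> CS rel; apply: sum_ind_segment_max => [j|y]; first exact: C_segment.
rewrite -[RHS](@sum_ind_nonempty (fun j x => S j x /\ dot w x = y)) => [|j|]; last first.
- exact: sum_ind_slice.
- exact: C_slice.
by apply: eq_sum_ind => j; split=> [[x ? ?]|[x []]]; exists x.
Qed.

End EulerCharacteristic.

Section Polytopes.
Variables (R : realFieldType) (N : nat) (W : finType) (V : W -> 'I_N -> R).

Definition polytope (L : (W -> R) -> Prop) (x : 'I_N -> R) : Prop :=
  exists2 l, feasible L l & forall i, x i = \sum_v l v * V v i.

Definition is_polytope (S : ('I_N -> R) -> Prop) : Prop :=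
  exists2 L, affine_pred L & S = polytope L.

Lemma dot_combination w l x : (forall i, x i = \sum_v l v * V v i) ->
  dot w x = dot (fun v => dot w (V v)) l.
Proof.
move=> xE; rewrite /dot (eq_bigr (fun i => \sum_v w i * (l v * V v i))) => [|i _].
  rewrite exchange_big; apply: eq_bigr => v _; rewrite mulr_suml.
  by apply: eq_bigr => i _; rewrite mulrCA mulrC.
by rewrite xE mulr_sumr.
Qed.

Lemma is_polytope_slice S w y :
  is_polytope S -> is_polytope (fun x => S x /\ dot w x = y).
Proof.
move=> [L affL ->]; exists (fun l => L l /\ dot (fun v => dot w (V v)) l = y).
  by apply: affine_predI => //; apply: affine_pred_dot.
apply: funext => x; apply: propext; split=> [[[l [? ? ?] xE] <-]|[l [? ? [? ?]] xE]].
  by exists l => //; split=> //; split=> //; rewrite (dot_combination w xE).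
by split; [exists l | rewrite (dot_combination w xE)].
Qed.

Lemma is_polytope_segment S w :
  is_polytope S -> segment (dot_image S w).
Proof.
move=> [L affL ->].
suff -> : dot_image (polytope L) w = dot_image (feasible L) (fun v => dot w (V v)).
  exact: segment_feasible_dot.
apply: funext => y; apply: propext; split=> [[x [l fl xE] <-]|[l fl <-]].
  by exists l; rewrite // (dot_combination w xE).
by exists (fun i => \sum_v l v * V v i); [exists l | exact: dot_combination].
Qed.

End Polytopes.

Section LexicographicWeights.
Variables (n : nat) (s : {perm 'I_n.+1}).
Local Open Scope nat_scope.

Definition lex_rank (j : 'I_n.+1) : nat := (s^-1)%g j.
Definition lex_weight (j : 'I_n.+1) : nat := n.+2 ^ (n - lex_rank j).
Definition lex_weight_set (B : {set 'I_n.+1}) : nat := \sum_(j in B) lex_weight j.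

Lemma lex_weight_tail i :
  \sum_(j | lex_rank i < lex_rank j) lex_weight j < lex_weight i.
Proof.
rewrite -(ltn_pmul2l (ltn0Sn n.+1)) big_distrr /=.
apply: (@leq_ltn_trans (\sum_(j | lex_rank i < lex_rank j) lex_weight i)).
  apply: leq_sum => j ij; rewrite /lex_weight -expnS leq_pexp2l //.
  by have := ltn_ord ((s^-1)%g j); rewrite /lex_rank in ij *; lia.
apply: (@leq_ltn_trans (\sum_(j : 'I_n.+1) lex_weight i)).
  by rewrite [X in _ <= X](bigID (fun j => lex_rank i < lex_rank j)) leq_addr.
by rewrite sum_nat_const card_ord ltn_pmul2r ?expn_gt0.
Qed.

Lemma lex_weight_set_lt (B B' : {set 'I_n.+1}) i : i \in B -> i \notin B' ->
  (forall j, lex_rank j < lex_rank i -> (j \in B) = (j \in B')) ->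
  lex_weight_set B' < lex_weight_set B.
Proof.
move=> iB niB' agree; rewrite /lex_weight_set.
rewrite (bigID (fun j => lex_rank j < lex_rank i)) /=.
rewrite [X in _ < X](bigID (fun j => lex_rank j < lex_rank i)) /=.
have -> : \sum_(j in B | lex_rank j < lex_rank i) lex_weight j =
          \sum_(j in B' | lex_rank j < lex_rank i) lex_weight j.
  by apply: eq_bigl => j; case: ltnP => ji; rewrite ?andbT ?andbF ?agree.
rewrite ltn_add2l [X in _ < X](bigD1 i) /=; last by rewrite iB ltnn.
apply: leq_trans (leq_addr _ _); apply: leq_ltn_trans (lex_weight_tail i).
rewrite [X in _ <= X]big_mkcond [X in X <= _]big_mkcond /=.
apply: leq_sum => j _; case: ifP => // /andP[jB']; rewrite -leqNgt leq_eqVlt.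
case/orP => [/eqP/val_inj/perm_inj ij|->] //.
by rewrite -ij (negbTE niB') in jB'.
Qed.

Lemma lex_leE (B B' : {set 'I_n.+1}) :
  lex_le s B B' = (lex_weight_set B' <= lex_weight_set B).
Proof.
apply/idP/idP.
  case/orP => [/eqP -> //|/existsP[i /andP[]]].
  rewrite inE => /andP[niB' iB] /forallP agree; apply/ltnW/(lex_weight_set_lt iB niB').
  by move=> j ji; apply/eqP/(implyP (agree j)).
move=> le_w; apply/orP; have [->|neB] := eqVneq B B'; [by left | right].
have [j0 j0P] : exists j, (j \in B) != (j \in B').
  apply/existsP; apply: contraR neB => /existsPn same; apply/eqP/setP => j.
  by apply/eqP; move/negPn: (same j).
case: (@arg_minnP _ j0 (fun j => (j \in B) != (j \in B')) lex_rank j0P) => i iP i_min.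
have agree j : lex_rank j < lex_rank i -> (j \in B) = (j \in B').
  by move=> ji; apply/eqP; apply: contraTT ji => /i_min; rewrite -leqNgt.
case iB: (i \in B) in iP.
  apply/existsP; exists i; rewrite !inE iB andbT; apply/andP; split.
    by move: iP; case: (i \in B').
  by apply/forallP => j; apply/implyP => /agree ->.
have iB' : i \in B' by move: iP; case: (i \in B').
have := lex_weight_set_lt iB' (negbT iB) (fun j ji => esym (agree j ji)).
by rewrite ltnNge le_w.
Qed.

Lemma lex_weight_set_inj : injective lex_weight_set.
Proof.
move=> B B' eq_w; apply/eqP; apply: contraT => neB.
have : lex_le s B B' by rewrite lex_leE eq_w.
case/orP => [/eqP eqB|]; first by rewrite eqB eqxx in neB.
case/existsP => i /andP[]; rewrite inE => /andP[niB' iB] /forallP agree.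
have := lex_weight_set_lt iB niB' (fun j ji => eqP (implyP (agree j) ji)).
by rewrite eq_w ltnn.
Qed.

Lemma lexfirst_basis_max (M : matroid n) :
  lexfirst_basis M s \in bases M /\
  forall B, B \in bases M -> lex_weight_set B <= lex_weight_set (lexfirst_basis M s).
Proof.
have [B1 B1M] : exists B, B \in bases M by apply/set0Pn; exact: bases_neq0.
rewrite /lexfirst_basis; case: pickP => [B /andP[BM /forallP Bfirst]|none] /=.
  by split=> // B' B'M; rewrite -lex_leE; exact: (implyP (Bfirst B')).
case: (arg_maxnP lex_weight_set B1M) => B0 B0M B0_max.
exfalso; move: (none B0); rewrite (B0M : B0 \in bases M) /= => /negbT/negP; apply; apply/forallP => B'.
by apply/implyP => /B0_max; rewrite lex_leE.
Qed.

End LexicographicWeights.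

Section BasePolytope.
Variables (R : realType) (n : nat).

Definition vertex (B : {set 'I_n.+1}) (i : 'I_n.+1) : R := (i \in B)%:R.

Definition supported_on_bases (M : matroid n) (l : {set 'I_n.+1} -> R) : Prop :=
  forall B, B \notin bases M -> l B = 0.

Lemma in_base_polytopeE M : in_base_polytope M = polytope vertex (supported_on_bases M).
Proof.
apply: funext => x; apply: propext.
by split=> [[l [? ? ? ?]]|[l [? ? ?] ?]]; exists l.
Qed.

Lemma is_polytope_base_polytope M : is_polytope vertex (in_base_polytope M).
Proof.
exists (supported_on_bases M); last exact: in_base_polytopeE.
by move=> l l1 l2 t l0 l10 l20 B nB; rewrite l0 // l10 // l20 // subrr mulr0 addr0.
Qed.

Definition lex_functional (s : {perm 'I_n.+1}) (i : 'I_n.+1) : R := (lex_weight s i)%:R.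

Lemma dot_lex_vertex s B : dot (lex_functional s) (vertex B) = (lex_weight_set s B)%:R.
Proof.
rewrite /dot natr_sum [RHS]big_mkcond; apply: eq_bigr => i _.
by rewrite /vertex; case: (i \in B); rewrite ?mulr1 ?mulr0.
Qed.

Lemma is_max_lex_base_polytope M s r :
  is_max (dot_image (in_base_polytope M) (lex_functional s)) r <->
  r = (lex_weight_set s (lexfirst_basis M s))%:R.
Proof.
have [BsM Bs_max] := lexfirst_basis_max s M.
set Bs := lexfirst_basis M s.
have bound y : dot_image (in_base_polytope M) (lex_functional s) y ->
    y <= (lex_weight_set s Bs)%:R.
  rewrite in_base_polytopeE => -[x [l [l_ge0 sum_l l0] xE] <-].
  rewrite (dot_combination _ xE).
  apply: (@le_trans _ _ (\sum_B (lex_weight_set s Bs)%:R * l B)).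
    apply: ler_sum => B _; rewrite dot_lex_vertex.
    have [BM|nBM] := boolP (B \in bases M); last by rewrite l0 // !mulr0.
    by rewrite ler_wpM2r // ler_nat Bs_max.
  by rewrite -mulr_sumr sum_l mulr1.
have attained :
    dot_image (in_base_polytope M) (lex_functional s) (lex_weight_set s Bs)%:R.
  exists (vertex Bs); last exact: dot_lex_vertex.
  exists (fun B => (B == Bs)%:R); split=> [B|B nBM||i].
  - by rewrite ler0n.
  - by case: eqP nBM => // ->; rewrite BsM.
  - by rewrite (bigD1 Bs) //= eqxx big1 ?addr0 // => B /negbTE ->.
  - rewrite (bigD1 Bs) //= eqxx mul1r big1 ?addr0 // => B /negbTE ->.
    by rewrite mul0r.
split=> [[img_r r_max]|->]; last by split=> // y lt_y /bound; rewrite leNgt lt_y.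
apply/eqP; rewrite eq_le bound //= leNgt; apply/negP => lt_r.
exact: r_max _ lt_r attained.
Qed.

Lemma sum_ind_lexfirst (s0 : seq (int * matroid n)) :
  (forall x : 'I_n.+1 -> R, \sum_(p <- s0) p.1 * indic_P p.2 x = 0) ->
  forall s B, \sum_(p <- s0) p.1 * ind (lexfirst_basis p.2 s = B) = 0.
Proof.
move=> rel s B; rewrite big_tnth; set q := tnth (in_tuple s0).
have H := @sum_ind_max R n.+1 (is_polytope vertex) (@is_polytope_slice _ _ _ _)
  (@is_polytope_segment _ _ _ _) _ (fun j => (q j).1)
  (fun j => in_base_polytope (q j).2) (lex_functional s)
  (fun j => is_polytope_base_polytope _) _ (lex_weight_set s B)%:R.
rewrite -[RHS]H => [|x]; last by move: (rel x); rewrite big_tnth; apply.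
apply: eq_sum_ind => j; rewrite is_max_lex_base_polytope; split=> [->|/eqP] //.
by rewrite eqr_nat => /eqP/lex_weight_set_inj.
Qed.

Lemma valuative_lexfirst (V : zmodType) (phi : matroid n -> {ffun {perm 'I_n.+1} -> V}) :
  (forall M M' s, lexfirst_basis M s = lexfirst_basis M' s -> phi M s = phi M' s) ->
  valuative R phi.
Proof.
move=> phi_lex s0 rel; apply/ffunP => s; rewrite sum_ffunE ffunE.
have split_B (p : int * matroid n) : phi p.2 s *~ p.1 =
    \sum_B phi p.2 s *~ (p.1 * ind (lexfirst_basis p.2 s = B)).
  rewrite (bigD1 (lexfirst_basis p.2 s)) //= indT // mulr1 big1 ?addr0 // => B neB.
  by rewrite indF ?mulr0 ?mulr0z // => eqB; rewrite eqB eqxx in neB.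
under eq_bigr do rewrite ffunMzE split_B.
rewrite exchange_big big1 //= => B _.
have [[M0 M0B]|none] := pselect (exists M0, lexfirst_basis M0 s = B); last first.
  by apply: big1 => p _; rewrite indF ?mulr0 ?mulr0z // => pB; apply: none; exists p.2.
transitivity (\sum_(p <- s0) phi M0 s *~ (p.1 * ind (lexfirst_basis p.2 s = B))).
  apply: eq_bigr => p _; have [pB|npB] := pselect (lexfirst_basis p.2 s = B).
    by rewrite (phi_lex p.2 M0) // pB.
  by rewrite indF ?mulr0 ?mulr0z.
by rewrite -mulrz_sumr (sum_ind_lexfirst rel) mulr0z.
Qed.

End BasePolytope.

Lemma chow_nonequiv_zero0 n : chow_nonequiv_zero (0 : {ffun {perm 'I_n.+1} -> Tpoly n}).
Proof.
exists (fun _ => [ffun => 0]); split=> [j s i k _|s].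
  by exists 0; rewrite !ffunE subrr mul0r.
rewrite big1 => [|j _]; last by rewrite ffunE mulr0.
by rewrite /GRing.zero /= /ffun_zero ffunE.
Qed.

Theorem proposition5p6 (R : realType) (n : nat)
  (m : nat) (F : {mpoly int[m]}%R) (idx : 'I_m -> 'I_4 * nat)
  (m' : nat) (G : {mpoly int[m']}%R) (idx' : 'I_m' -> 'I_4 * nat) :
  [/\ valuative R (@K_class n m F idx),
      valuative R (@chow_classT n m' G idx') &
      valuative_nonequiv R (@chow_classT n m' G idx')].
Proof.
have chow_val : valuative R (@chow_classT n m' G idx').
  apply: valuative_lexfirst => M M' s eqB.
  by rewrite [LHS]ffunE [RHS]ffunE /chern_loc eqB.
split=> //.
  apply: valuative_lexfirst => M M' s eqB.
  by rewrite [LHS]ffunE [RHS]ffunE /ext_power_loc eqB.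
by move=> s0 /chow_val ->; exact: chow_nonequiv_zero0.
Qed.
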